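(* Let $n=2p$ with $p$ a positive integer, $m$ a positive integer, and $s$ a real number with $0\le s\le p$. Define $$g(\alpha)=2\sum_{i=1}^p\Big(2i\alpha_i+m\big(\alpha_i+1-\tfrac{s}{p}\big)^+\Big)$$ on $\mathcal{P}=\{\alpha\in\mathbb{R}^p:\ \tfrac{s}{p}\ge\alpha_1\ge\cdots\ge\alpha_p,\ \sum_{i=1}^p\alpha_i=0\}$. If $m\ge 2(\lceil s\rceil-1)$, then $\min_{\alpha\in\mathcal{P}}g(\alpha)\ge d_2(s)$, where $d_2$ is the piecewise linear function connecting the points $(s,(n-2s)(m-s))$ for $s\in\mathbb{Z}$.
   Context: $(x)^+=\max(0,x)$. *)

From Stdlib Require Import Reals Lra Lia List.
Open Scope R_scope.

Definition pos_part (x : R) : R := Rmax 0 x.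

(* floor and ceiling on R, via Stdlib's [up] (up x is the unique integer
   with x < up x <= x + 1) *)
Definition Rfloor (x : R) : Z := (up x - 1)%Z.
Definition Rceiling (x : R) : Z := (- Rfloor (- x))%Z.

Definition sum1 (p : nat) (f : nat -> R) : R :=
  fold_right Rplus 0 (map f (seq 1 p)).

(* the polytope P, alpha indexed by 1..p *)
Definition in_P (p : nat) (s : R) (alpha : nat -> R) : Prop :=
  alpha 1%nat <= s / INR p /\
  (forall i : nat, (1 <= i < p)%nat -> alpha (S i) <= alpha i) /\
  sum1 p alpha = 0.

Definition g_fun (p m : nat) (s : R) (alpha : nat -> R) : R :=
  2 * sum1 p (fun i => 2 * INR i * alpha i
                       + INR m * pos_part (alpha i + 1 - s / INR p)).

Definition d2_node (n m : nat) (k : Z) : R :=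
  (INR n - 2 * IZR k) * (INR m - IZR k).

Definition d2_fun (n m : nat) (s : R) : R :=
  let k := Rfloor s in
  (IZR k + 1 - s) * d2_node n m k + (s - IZR k) * d2_node n m (k + 1).

(* The bound is an LP-duality certificate.  Put C = ⌈s⌉, K = p - C and
   e_i = α_i + 1 - s/p, so that e_i <= 1 and Σ e_i = p - s.  Every summand
   2iα_i + m e_i^+ is bounded below by the affine function
   2i(s/p - 1) + (2(K+1) + m) e_i + h_i, with h_i = 2(i - K - 1) for i <= K
   and h_i = 0 otherwise: for i <= K because e_i <= 1, and for i > K because
   2i <= 2(K+1) + m, which is exactly the hypothesis m >= 2(C-1).  The slope
   in e_i does not depend on i, so summing leaves an affine function of s,
   and it coincides with the interpolation d_2 on [C-1, C]. *)

From Stdlib Require Import Reals Lra Lia List ZArith.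
Open Scope R_scope.

Lemma fold_right_Rplus_init (a : R) (l : list R) :
  fold_right Rplus a l = fold_right Rplus 0 l + a.
Proof. induction l as [|x l IH]; simpl; [|rewrite IH]; ring. Qed.

Lemma sum1_0 (f : nat -> R) : sum1 0 f = 0.
Proof. reflexivity. Qed.

Lemma sum1_S (p : nat) (f : nat -> R) : sum1 (S p) f = sum1 p f + f (S p).
Proof.
  unfold sum1. rewrite seq_S, map_app, fold_right_app; simpl.
  rewrite fold_right_Rplus_init. replace (1 + p)%nat with (S p) by lia. ring.
Qed.

Lemma sum1_ext (p : nat) (f g : nat -> R) :
  (forall i, f i = g i) -> sum1 p f = sum1 p g.
Proof. intros Hfg. unfold sum1. f_equal. apply map_ext, Hfg. Qed.

Lemma sum1_le (p : nat) (f g : nat -> R) :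
  (forall i, (1 <= i <= p)%nat -> f i <= g i) -> sum1 p f <= sum1 p g.
Proof.
  induction p as [|p IH]; intros Hfg; rewrite ?sum1_0, ?sum1_S; [lra|].
  assert (f (S p) <= g (S p)) by (apply Hfg; lia).
  assert (sum1 p f <= sum1 p g) by (apply IH; intros; apply Hfg; lia).
  lra.
Qed.

Lemma sum1_add (p : nat) (f g : nat -> R) :
  sum1 p (fun i => f i + g i) = sum1 p f + sum1 p g.
Proof. induction p as [|p IH]; rewrite ?sum1_0, ?sum1_S; [|rewrite IH]; ring. Qed.

Lemma sum1_scal (p : nat) (a : R) (f : nat -> R) :
  sum1 p (fun i => a * f i) = a * sum1 p f.
Proof. induction p as [|p IH]; rewrite ?sum1_0, ?sum1_S; [|rewrite IH]; ring. Qed.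

Lemma sum1_const (p : nat) (c : R) : sum1 p (fun _ => c) = INR p * c.
Proof.
  induction p as [|p IH]; rewrite ?sum1_0, ?sum1_S; [simpl; ring|].
  rewrite IH, S_INR; ring.
Qed.

Lemma sum1_INR (p : nat) : sum1 p INR = INR p * (INR p + 1) / 2.
Proof.
  induction p as [|p IH]; rewrite ?sum1_0, ?sum1_S; [simpl; field|].
  rewrite IH, S_INR; field.
Qed.

Lemma in_P_le_top (p : nat) (s : R) (alpha : nat -> R) :
  in_P p s alpha -> forall i, (1 <= i <= p)%nat -> alpha i <= s / INR p.
Proof.
  intros [Htop [Hmon _]] i. induction i as [|i IH]; intros Hi; [lia|].
  destruct (Nat.eq_dec i 0) as [->|Hi0]; [exact Htop|].
  specialize (Hmon i ltac:(lia)). specialize (IH ltac:(lia)). lra.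
Qed.

Definition dual_weight (K i : nat) : R :=
  if (i <=? K)%nat then 2 * (INR i - INR K - 1) else 0.

Lemma sum1_dual_weight (p K : nat) : (K <= p)%nat ->
  sum1 p (dual_weight K) = - INR K * (INR K + 1).
Proof.
  intros HK.
  assert (Hmin : forall q, sum1 q (dual_weight K) =
    INR (Nat.min q K) * (INR (Nat.min q K) + 1)
    - 2 * INR (Nat.min q K) * (INR K + 1)).
  { induction q as [|q IH]; rewrite ?sum1_0, ?sum1_S; [simpl; ring|].
    rewrite IH. unfold dual_weight.
    destruct (Nat.leb_spec (S q) K).
    - rewrite !Nat.min_l, S_INR by lia. ring.
    - replace (Nat.min (S q) K) with (Nat.min q K) by lia. ring. }
  rewrite Hmin, Nat.min_r by exact HK. ring.
Qed.

Lemma summand_ge_dual (K m i : nat) (t a : R) :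
  a <= t -> (2 * i <= 2 * S K + m)%nat ->
  2 * INR i * (t - 1) + (2 * INR (S K) + INR m) * (a + 1 - t) + dual_weight K i
  <= 2 * INR i * a + INR m * pos_part (a + 1 - t).
Proof.
  intros Hat Hi.
  assert (HiR : 2 * INR i <= 2 * INR (S K) + INR m).
  { replace (2 * INR i) with (INR (2 * i)) by (rewrite mult_INR; simpl; ring).
    replace (2 * INR (S K) + INR m) with (INR (2 * S K + m))
      by (rewrite plus_INR, mult_INR; simpl; ring).
    apply le_INR, Hi. }
  rewrite S_INR in *.
  set (e := a + 1 - t). replace a with (e + t - 1) by (unfold e; ring).
  assert (He : e <= 1) by (unfold e; lra).
  unfold pos_part, dual_weight.
  destruct (Nat.leb_spec i K) as [HiK|HiK].
  - assert (INR i <= INR K) by (apply le_INR, HiK).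
    destruct (Rle_dec 0 e); [rewrite Rmax_right by lra | rewrite Rmax_left by lra];
      nra.
  - assert (INR K + 1 <= INR i) by (rewrite <- S_INR; apply le_INR, HiK).
    destruct (Rle_dec 0 e); [rewrite Rmax_right by lra | rewrite Rmax_left by lra];
      nra.
Qed.

Lemma g_fun_ge_affine (p m k : nat) (s : R) (alpha : nat -> R) :
  (0 < p)%nat -> (k <= p)%nat -> INR m >= 2 * (INR k - 1) ->
  in_P p s alpha ->
  g_fun p m s alpha >=
  2 * ((INR p - s) * (INR m + INR p - 2 * INR k + 1)
       - (INR p - INR k) * (INR p - INR k + 1)).
Proof.
  intros Hp Hkp Hm HP.
  assert (HpR : 0 < INR p) by (apply lt_0_INR; lia).
  set (K := (p - k)%nat).
  assert (HK : INR K = INR p - INR k) by (unfold K; rewrite minus_INR by lia; ring).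
  assert (Hsum_alpha : sum1 p alpha = 0) by apply HP.
  set (t := s / INR p).
  assert (Ht : t * INR p = s) by (unfold t; field; lra).
  assert (Hbound : sum1 p
    (fun i => 2 * INR i * (t - 1) + (2 * INR (S K) + INR m) * (alpha i + 1 - t)
              + dual_weight K i)
    <= sum1 p (fun i => 2 * INR i * alpha i + INR m * pos_part (alpha i + 1 - t))).
  { apply sum1_le. intros i Hi. apply summand_ge_dual.
    - apply (in_P_le_top p s alpha HP i Hi).
    - assert (Hmk : (2 * k <= m + 2)%nat).
      { apply INR_le. rewrite mult_INR, plus_INR. simpl. lra. }
      unfold K. lia. }
  rewrite !sum1_add, sum1_dual_weight in Hbound by (unfold K; lia).
  rewrite (sum1_scal p (2 * INR (S K) + INR m)) in Hbound.
  replace (sum1 p (fun i => 2 * INR i * (t - 1))) with ((t - 1) * 2 * sum1 p INR)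
    in Hbound by (rewrite <- sum1_scal; apply sum1_ext; intro; ring).
  replace (sum1 p (fun i => alpha i + 1 - t)) with (INR p * (1 - t)) in Hbound
    by (rewrite (sum1_ext p _ (fun i => alpha i + (1 - t))) by (intro; ring);
        rewrite sum1_add, sum1_const, Hsum_alpha; ring).
  rewrite sum1_INR, S_INR, HK in Hbound.
  unfold g_fun. fold t. rewrite sum1_add, <- Ht. nra.
Qed.

Lemma Rfloor_spec (x : R) : IZR (Rfloor x) <= x < IZR (Rfloor x) + 1.
Proof. unfold Rfloor. rewrite minus_IZR. destruct (archimed x). lra. Qed.

Lemma Rceiling_spec (x : R) : x <= IZR (Rceiling x) < x + 1.
Proof.
  unfold Rceiling. rewrite opp_IZR. destruct (Rfloor_spec (- x)). lra.
Qed.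

Lemma d2_fun_interp (n m : nat) (s : R) (k : Z) :
  IZR k - 1 <= s <= IZR k ->
  d2_fun n m s = (IZR k - s) * d2_node n m (k - 1) + (s - IZR k + 1) * d2_node n m k.
Proof.
  intros Hs. unfold d2_fun.
  destruct (Rfloor_spec s) as [Hj1 Hj2].
  assert (Hjk : (Rfloor s <= k)%Z) by (apply le_IZR; lra).
  assert (Hkj : (k - 2 < Rfloor s)%Z) by (apply lt_IZR; rewrite minus_IZR; lra).
  destruct (Z.eq_dec (Rfloor s) k) as [Heq|Hne].
  - rewrite Heq in *. replace s with (IZR k) by lra. ring.
  - replace (Rfloor s) with (k - 1)%Z by lia.
    replace (k - 1 + 1)%Z with k by ring. rewrite minus_IZR. ring.
Qed.

Lemma d2_fun_affine (p m k : nat) (s : R) :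
  INR k - 1 <= s <= INR k ->
  d2_fun (2 * p) m s =
  2 * ((INR p - s) * (INR m + INR p - 2 * INR k + 1)
       - (INR p - INR k) * (INR p - INR k + 1)).
Proof.
  intros Hs. rewrite (d2_fun_interp _ _ _ (Z.of_nat k)) by (rewrite <- INR_IZR_INZ; lra).
  unfold d2_node. rewrite minus_IZR, <- INR_IZR_INZ, mult_INR. simpl. ring.
Qed.

Theorem mainTheorem6 (p m : nat) (s : R) :
  (0 < p)%nat -> (0 < m)%nat ->
  0 <= s -> s <= INR p ->
  INR m >= 2 * (IZR (Rceiling s) - 1) ->
  forall alpha : nat -> R, in_P p s alpha ->
    g_fun p m s alpha >= d2_fun (2 * p)%nat m s.
Proof.
  intros Hp _ Hs0 Hsp Hm alpha HP.
  destruct (Rceiling_spec s) as [HC1 HC2].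
  assert (HC0 : (0 <= Rceiling s)%Z) by (apply le_IZR; lra).
  set (k := Z.to_nat (Rceiling s)).
  assert (Hk : INR k = IZR (Rceiling s)) by (unfold k; rewrite INR_IZR_INZ, Z2Nat.id by lia; reflexivity).
  assert (Hkp : (k <= p)%nat).
  { assert (Rceiling s < Z.of_nat p + 1)%Z
      by (apply lt_IZR; rewrite plus_IZR, <- INR_IZR_INZ; lra).
    unfold k. lia. }
  rewrite (d2_fun_affine p m k) by lra.
  apply g_fun_ge_affine; [exact Hp | exact Hkp | lra | exact HP].
Qed.
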